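(* Let $\tilde{\bm C}_n,\tilde{\bm C}_{n+1}$ be symmetric positive-definite tensors, $\Delta t_n>0$, and $\bm\Gamma^1_n,\dots,\bm\Gamma^m_n$ symmetric tensors. For $\alpha=1,\dots,m$ define $$\bm\Gamma^\alpha_{n+1}:=\frac{\Delta t_n}{\eta^\alpha+\mu^\alpha\Delta t_n/2}\left(\frac{\tilde{\bm S}^\alpha_{\mathrm{iso}}(\tilde{\bm C}_{n+1})+\tilde{\bm S}^\alpha_{\mathrm{iso}}(\tilde{\bm C}_{n})}{2}-\hat{\bm S}^\alpha_0-\Big(\frac{\mu^\alpha}{2}-\frac{\eta^\alpha}{\Delta t_n}\Big)\bm\Gamma^\alpha_n+\mu^\alpha\bm I\right)$$ and $\bm\Gamma^\alpha_{n+\frac12}:=\frac12(\bm\Gamma^\alpha_n+\bm\Gamma^\alpha_{n+1})$. Then $$G_{\mathrm{iso}}(\tilde{\bm C}_{n+1},\bm\Gamma^1_{n+1},\dots,\bm\Gamma^m_{n+1})-G_{\mathrm{iso}}(\tilde{\bm C}_{n+1},\bm\Gamma^1_{n+\frac12},\dots,\bm\Gamma^m_{n+\frac12})+G_{\mathrm{iso}}(\tilde{\bm C}_{n},\bm\Gamma^1_{n+\frac12},\dots,\bm\Gamma^m_{n+\frac12})-G_{\mathrm{iso}}(\tilde{\bm C}_{n},\bm\Gamma^1_{n},\dots,\bm\Gamma^m_{n})=-\frac12\Delta t_n\sum_{\alpha=1}^m\eta^\alpha\left|\frac{\bm\Gamma^\alpha_{n+1}-\bm\Gamma^\alpha_n}{\Delta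 t_n}\right|^2.$$
   Context: $|\bm A|=(\bm A:\bm A)^{1/2}$; $\bm I$ the identity tensor. Fix $m\ge1$; for each $\alpha$: $\mu^\alpha>0$, $\eta^\alpha>0$, constant symmetric tensor $\hat{\bm S}^\alpha_0$, smooth scalar function $G^\alpha$ on symmetric positive-definite tensors with $\tilde{\bm S}^\alpha_{\mathrm{iso}}(\tilde{\bm C}):=2\partial G^\alpha/\partial\tilde{\bm C}$; $G^\infty_{\mathrm{iso}}$ a smooth scalar function. $\Upsilon^\alpha(\tilde{\bm C},\bm\Gamma):=\frac{1}{4\mu^\alpha}|\tilde{\bm S}^\alpha_{\mathrm{iso}}(\tilde{\bm C})-\hat{\bm S}^\alpha_0-\mu^\alpha(\bm\Gamma-\bm I)|^2$ and $G_{\mathrm{iso}}(\tilde{\bm C},\bm\Gamma^1,\dots,\bm\Gamma^m):=G^\infty_{\mathrm{iso}}(\tilde{\bm C})+\sum_{\alpha=1}^m\Upsilon^\alpha(\tilde{\bm C},\bm\Gamma^\alpha)$. *)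

From HB Require Import structures.
From mathcomp Require Import all_boot all_order all_algebra.
From mathcomp Require Import all_classical all_reals all_analysis.
Set Implicit Arguments. Unset Strict Implicit. Unset Printing Implicit Defensive.
Import Order.TTheory GRing.Theory Num.Theory.
Import numFieldNormedType.Exports.
Local Open Scope ring_scope.

Section Defs.
Variable R : realType.

Definition tensor := 'M[R]_3.

Definition ddot (A B : tensor) : R := \sum_(i < 3) \sum_(j < 3) A i j * B i j.

Definition tnorm (A : tensor) : R := Num.sqrt (ddot A A).

Definition sym_tensor (A : tensor) : Prop := A^T = A.

Definition spd (A : tensor) : Prop :=
  sym_tensor A /\ forall v : 'rV[R]_3, v != 0 -> 0 < (v *m A *m v^T) 0 0.

(* partial derivative dG/dC as the tensor of componentwise partial derivatives *)
Definition dG (G : tensor -> R) (C : tensor) : tensor :=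
  \matrix_(i < 3, j < 3) ('D_(delta_mx i j) G C).

Definition Siso (G : tensor -> R) (C : tensor) : tensor := 2%:R *: dG G C.

Definition Upsilon (G : tensor -> R) (S0 : tensor) (mu : R) (C Gam : tensor) : R :=
  (4%:R * mu)^-1 * tnorm (Siso G C - S0 - mu *: (Gam - 1%:M)) ^+ 2.

Definition Giso (m : nat) (Ginf : tensor -> R) (G : 'I_m -> tensor -> R)
  (S0 : 'I_m -> tensor) (mu : 'I_m -> R) (C : tensor) (Gam : 'I_m -> tensor) : R :=
  Ginf C + \sum_(a < m) Upsilon (G a) (S0 a) (mu a) C (Gam a).

Definition Gamma_next (G : tensor -> R) (S0 : tensor) (mu eta dt : R)
  (Cn Cn1 Gn : tensor) : tensor :=
  (dt / (eta + mu * dt / 2%:R)) *: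
    ((2%:R)^-1 *: (Siso G Cn1 + Siso G Cn) - S0
     - (mu / 2%:R - eta / dt) *: Gn + mu *: 1%:M).

End Defs.

From HB Require Import structures.
From mathcomp Require Import all_boot all_order all_algebra.
From mathcomp Require Import all_classical all_reals all_analysis.
From mathcomp Require Import ring.
Import Order.TTheory GRing.Theory Num.Theory.
Import numFieldNormedType.Exports.
Local Open Scope ring_scope.

(* With Y(C) := S_iso(C) - S_0 + mu I, each Upsilon is |Y(C) - mu Gamma|^2 / (4 mu).
   Polarisation, |u|^2 - |v|^2 = (u - v) : (u + v), collapses the four-term
   difference of Upsilon to
   (1/4) (Gamma_n - Gamma_{n+1}) : (Y(C_{n+1}) + Y(C_n) - mu (Gamma_n + Gamma_{n+1})),
   and the update rule is precisely the midpoint rule that makes the second factor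
   (2 eta / dt) (Gamma_{n+1} - Gamma_n); G^infty cancels.  The identity is purely
   algebraic. *)

Section DoubleContraction.
Variable R : realType.
Implicit Types (A B C : tensor R) (a : R).

Lemma ddotC A B : ddot A B = ddot B A.
Proof. by apply: eq_bigr => i _; apply: eq_bigr => j _; rewrite mulrC. Qed.

Lemma ddotDl A B C : ddot (A + B) C = ddot A C + ddot B C.
Proof.
rewrite /ddot -big_split; apply: eq_bigr => i _.
by rewrite -big_split; apply: eq_bigr => j _; rewrite mxE mulrDl.
Qed.

Lemma ddotZl a A B : ddot (a *: A) B = a * ddot A B.
Proof.
rewrite /ddot mulr_sumr; apply: eq_bigr => i _.
by rewrite mulr_sumr; apply: eq_bigr => j _; rewrite mxE mulrA.
Qed.

Lemma ddotNl A B : ddot (- A) B = - ddot A B.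
Proof. by rewrite -scaleN1r ddotZl mulN1r. Qed.

Lemma ddotBl A B C : ddot (A - B) C = ddot A C - ddot B C.
Proof. by rewrite ddotDl ddotNl. Qed.

Lemma ddotDr A B C : ddot A (B + C) = ddot A B + ddot A C.
Proof. by rewrite ddotC ddotDl !(ddotC A). Qed.

Lemma ddotZr a A B : ddot A (a *: B) = a * ddot A B.
Proof. by rewrite ddotC ddotZl ddotC. Qed.

Lemma ddot_subr_sqr A B : ddot A A - ddot B B = ddot (A - B) (A + B).
Proof. by rewrite ddotBl !ddotDr (ddotC B A); ring. Qed.

Lemma ddot_ge0 A : 0 <= ddot A A.
Proof. by apply: sumr_ge0 => i _; apply: sumr_ge0 => j _; rewrite -expr2 sqr_ge0. Qed.

Lemma tnorm_sqr A : tnorm A ^+ 2 = ddot A A.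
Proof. by rewrite sqr_sqrtr // ddot_ge0. Qed.

Lemma ddot_midpoint (A B X0 X1 : tensor R) (mu : R) :
  let Xh := (2%:R)^-1 *: (X0 + X1) in
  ddot (A - mu *: X1) (A - mu *: X1) - ddot (A - mu *: Xh) (A - mu *: Xh)
  + (ddot (B - mu *: Xh) (B - mu *: Xh) - ddot (B - mu *: X0) (B - mu *: X0))
  = mu * ddot (X0 - X1) (A + B - mu *: (X0 + X1)).
Proof.
move=> Xh; rewrite !ddot_subr_sqr.
have halfA : (A - mu *: X1) - (A - mu *: Xh) = (mu / 2%:R) *: (X0 - X1).
  by apply/matrixP => i j; rewrite !mxE; field.
have halfB : (B - mu *: Xh) - (B - mu *: X0) = (mu / 2%:R) *: (X0 - X1).
  by apply/matrixP => i j; rewrite !mxE; field.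
have sum2 : (A - mu *: X1) + (A - mu *: Xh) + ((B - mu *: Xh) + (B - mu *: X0))
          = 2%:R *: (A + B - mu *: (X0 + X1)).
  by apply/matrixP => i j; rewrite !mxE; field.
by rewrite halfA halfB !ddotZl -mulrDr -ddotDr sum2 ddotZr; field.
Qed.

End DoubleContraction.

Section ViscousBranch.
Variables (R : realType) (G : tensor R -> R) (S0 : tensor R) (mu eta dt : R).
Hypotheses (mu_gt0 : 0 < mu) (eta_gt0 : 0 < eta) (dt_gt0 : 0 < dt).

Let Y (C : tensor R) : tensor R := Siso G C - S0 + mu *: 1%:M.

Lemma Upsilon_ddot (C Gam : tensor R) :
  Upsilon G S0 mu C Gam = (4%:R * mu)^-1 * ddot (Y C - mu *: Gam) (Y C - mu *: Gam).
Proof. by rewrite /Upsilon tnorm_sqr /Y scalerBr opprB addrA. Qed.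

Lemma Gamma_next_midpoint (Cn Cn1 Gn : tensor R) :
  let Gn1 := Gamma_next G S0 mu eta dt Cn Cn1 Gn in
  Y Cn1 + Y Cn - mu *: (Gn + Gn1) = (2%:R * eta / dt) *: (Gn1 - Gn).
Proof.
apply/matrixP => i j; rewrite /Gamma_next /Y !mxE.
move: (Siso G Cn1 i j) (Siso G Cn i j) ((i == j)%:R : R) => s1 s0 e.
by field; rewrite !gt_eqF ?addr_gt0 ?mulr_gt0.
Qed.

Lemma Upsilon_dissipation (Cn Cn1 Gn : tensor R) :
  let Gn1 := Gamma_next G S0 mu eta dt Cn Cn1 Gn in
  let Gnh := (2%:R)^-1 *: (Gn + Gn1) in
  Upsilon G S0 mu Cn1 Gn1 - Upsilon G S0 mu Cn1 Gnh
  + Upsilon G S0 mu Cn Gnh - Upsilon G S0 mu Cn Gn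
  = - (2%:R)^-1 * dt * (eta * tnorm (dt^-1 *: (Gn1 - Gn)) ^+ 2).
Proof.
move=> Gn1 Gnh.
have energy := ddot_midpoint _ (Y Cn1) (Y Cn) Gn Gn1 mu.
rewrite Gamma_next_midpoint ddotZr -(opprB Gn1 Gn) ddotNl in energy.
rewrite !Upsilon_ddot -!mulrBr -mulrDr -mulrBr -addrA energy.
rewrite tnorm_sqr !ddotZl !ddotZr.
by field; rewrite !gt_eqF.
Qed.

End ViscousBranch.

Lemma Giso_sub (R : realType) (m : nat) (Ginf : tensor R -> R)
    (G : 'I_m -> tensor R -> R) (S0 : 'I_m -> tensor R) (mu : 'I_m -> R)
    (C : tensor R) (P Q : 'I_m -> tensor R) :
  Giso Ginf G S0 mu C P - Giso Ginf G S0 mu C Q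
  = \sum_(a < m) (Upsilon (G a) (S0 a) (mu a) C (P a)
                  - Upsilon (G a) (S0 a) (mu a) C (Q a)).
Proof. by rewrite /Giso opprD addrACA subrr add0r sumrB. Qed.

Theorem lemma4 (R : realType) (m : nat) (hm : (0 < m)%N)
  (mu eta : 'I_m -> R) (S0 : 'I_m -> 'M[R]_3)
  (G : 'I_m -> 'M[R]_3 -> R) (Ginf : 'M[R]_3 -> R)
  (hmu : forall a, 0 < mu a) (heta : forall a, 0 < eta a)
  (hS0 : forall a, sym_tensor (S0 a))
  (hG : forall a C, spd C -> differentiable (G a) C)
  (hGinf : forall C, spd C -> differentiable Ginf C)
  (Cn Cn1 : 'M[R]_3) (dt : R) (Gn : 'I_m -> 'M[R]_3)
  (hCn : spd Cn) (hCn1 : spd Cn1) (hdt : 0 < dt)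
  (hGn : forall a, sym_tensor (Gn a)) :
  let Gn1 := fun a => Gamma_next (G a) (S0 a) (mu a) (eta a) dt Cn Cn1 (Gn a) in
  let Gnh := fun a => (2%:R)^-1 *: (Gn a + Gn1 a) in
  Giso Ginf G S0 mu Cn1 Gn1 - Giso Ginf G S0 mu Cn1 Gnh
  + Giso Ginf G S0 mu Cn Gnh - Giso Ginf G S0 mu Cn Gn
  = - (2%:R)^-1 * dt * \sum_(a < m) eta a * tnorm (dt^-1 *: (Gn1 a - Gn a)) ^+ 2.
Proof.
move=> Gn1 Gnh.
rewrite -addrA !Giso_sub -big_split mulr_sumr; apply: eq_bigr => a _.
rewrite /= addrA.
exact: (Upsilon_dissipation _ _ _ _ _ _ (hmu a) (heta a) hdt).
Qed.
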